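(* Let $G$ be the infinite king grid. The code $C=\{(x,y)\in\mathbb{Z}^2\mid x-y\equiv 0\pmod 3\}$ is self-locating-dominating in $G$ and its density is $1/3$.
   Context: The infinite king grid $G=(V,E)$ has $V=\mathbb{Z}^2$, and distinct vertices $(u_1,u_2)$, $(v_1,v_2)$ are adjacent iff $|u_1-v_1|\le1$ and $|u_2-v_2|\le1$. Let $V_n=\{(x,y)\mid |x|\le n,|y|\le n\}$; the density of a code $C\subseteq V$ is $D(C)=\limsup_{n\to\infty}|C\cap V_n|/|V_n|$. $N[v]$ is the closed neighbourhood of $v$, and for a code $C$, $I(C;v)=N[v]\cap C$. A code $C$ is self-locating-dominating if for every $u\in V\setminus C$, $I(C;u)\ne\emptyset$ and $\bigcap_{c\in I(C;u)}N[c]=\{u\}$. *)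

From Stdlib Require Import Reals ZArith List Lia.
From Coquelicot Require Import Coquelicot.
Import ListNotations.
Open Scope Z_scope.

Definition vertex := (Z * Z)%type.

Definition king_adj (u v : vertex) : Prop :=
  u <> v /\ Z.abs (fst u - fst v) <= 1 /\ Z.abs (snd u - snd v) <= 1.

Definition closed_nbhd (v w : vertex) : Prop := w = v \/ king_adj v w.

Definition code := vertex -> bool.

Definition I_set (C : code) (u c : vertex) : Prop := closed_nbhd u c /\ C c = true.

Definition self_locating_dominating (C : code) : Prop :=
  forall u : vertex, C u = false ->
    (exists c, I_set C u c) /\
    (forall w : vertex, (forall c, I_set C u c -> closed_nbhd c w) <-> w = u).

(* V_n = {(x,y) | |x| <= n, |y| <= n}, enumerated as a list without repetition. *)
Definition zrange (n : nat) : list Z :=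
  map (fun k => Z.of_nat k - Z.of_nat n) (seq 0 (2 * n + 1)).
Definition V_n (n : nat) : list vertex := list_prod (zrange n) (zrange n).

Definition density (C : code) : Rbar :=
  LimSup_seq (fun n : nat =>
    (INR (length (filter C (V_n n))) / INR (length (V_n n)))%R).

Definition C3 : code := fun v => Z.eqb ((fst v - snd v) mod 3) 0.

(* Every vertex u = (x, y) outside C3 has x - y = s (mod 3) with s = 1 or s = -1; then
   (x - s, y), (x, y + s) and (x + s, y - s) are codewords of N[u], and the only vertex at
   king distance at most 1 from all three is u itself.  For the density, any run of m
   consecutive integers contains between (m - 2)/3 and (m + 2)/3 elements of a residue
   class mod 3, so each of the 2n+1 columns of V_n carries (2n+1)/3 + O(1) codewords and
   |C3 ∩ V_n| / |V_n| = 1/3 + O(1/n). *)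
From Stdlib Require Import Reals ZArith List Lia Lra.
From Coquelicot Require Import Coquelicot.
Open Scope Z_scope.

Lemma closed_nbhd_iff (u w : vertex) :
  closed_nbhd u w <-> Z.abs (fst u - fst w) <= 1 /\ Z.abs (snd u - snd w) <= 1.
Proof.
  destruct u as [a b], w as [c d]; unfold closed_nbhd, king_adj; cbn [fst snd].
  split.
  - intros [E | [_ H]]; [injection E as -> ->; lia | exact H].
  - intros H. destruct (Z.eq_dec a c), (Z.eq_dec b d); subst;
      [left; reflexivity | right; split; [congruence | exact H] ..].
Qed.

Lemma closed_nbhd_sym (u w : vertex) : closed_nbhd u w -> closed_nbhd w u.
Proof. rewrite !closed_nbhd_iff; lia. Qed.

Lemma self_locating_at_of_witnesses (C : code) (u : vertex) (S : vertex -> Prop) :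
  (forall c, S c -> I_set C u c) ->
  (exists c, S c) ->
  (forall w, (forall c, S c -> closed_nbhd c w) -> w = u) ->
  (exists c, I_set C u c) /\
  (forall w, (forall c, I_set C u c -> closed_nbhd c w) <-> w = u).
Proof.
  intros HS [c0 Hc0] Hsep. split; [exists c0; auto |].
  intros w; split.
  - intros Hw. apply Hsep. auto.
  - intros -> c [Hc _]. now apply closed_nbhd_sym.
Qed.

Lemma nonzero_mod3_sign (d : Z) :
  d mod 3 <> 0 -> exists s, (s = 1 \/ s = -1) /\ (d - s) mod 3 = 0.
Proof.
  intros Hd. destruct (Z.eq_dec (d mod 3) 1).
  - exists 1. split; [now left |]. Z.div_mod_to_equations. lia.
  - exists (-1). split; [now right |]. Z.div_mod_to_equations. lia.
Qed.

Lemma C3_self_locating_dominating : self_locating_dominating C3.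
Proof.
  intros [x y] Hu. unfold C3 in Hu; cbn [fst snd] in Hu. apply Z.eqb_neq in Hu.
  destruct (nonzero_mod3_sign _ Hu) as [s [Hs Hxy]].
  apply (self_locating_at_of_witnesses C3 (x, y)
           (fun c => c = (x - s, y) \/ c = (x, y + s) \/ c = (x + s, y - s))).
  - intros c Hc. split.
    + apply closed_nbhd_iff. destruct Hc as [-> | [-> | ->]]; cbn [fst snd]; lia.
    + unfold C3. apply Z.eqb_eq.
      destruct Hc as [-> | [-> | ->]]; cbn [fst snd]; Z.div_mod_to_equations; lia.
  - eauto.
  - intros [p q] Hw.
    pose proof (proj1 (closed_nbhd_iff _ _) (Hw _ (or_introl eq_refl))).
    pose proof (proj1 (closed_nbhd_iff _ _) (Hw _ (or_intror (or_introl eq_refl)))).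
    pose proof (proj1 (closed_nbhd_iff _ _) (Hw _ (or_intror (or_intror eq_refl)))).
    cbn [fst snd] in *. f_equal; lia.
Qed.

Lemma length_filter_mod3_seq (c : Z) (m s : nat) :
  Z.of_nat (length (filter (fun k : nat => (c - Z.of_nat k) mod 3 =? 0) (seq s m)))
  = (Z.of_nat m + 2 - (c - Z.of_nat s) mod 3) / 3.
Proof.
  revert s; induction m as [| m IH]; intros s; cbn [seq filter].
  - cbn [length]. Z.div_mod_to_equations. lia.
  - rewrite Nat2Z.inj_succ.
    destruct ((c - Z.of_nat s) mod 3 =? 0) eqn:E; [rewrite Z.eqb_eq in E | rewrite Z.eqb_neq in E];
      cbn [length]; rewrite ?Nat2Z.inj_succ, IH, Nat2Z.inj_succ; Z.div_mod_to_equations; lia.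
Qed.

Lemma length_zrange (n : nat) : length (zrange n) = (2 * n + 1)%nat.
Proof. unfold zrange. now rewrite length_map, length_seq. Qed.

Lemma C3_row_count (x : Z) (n : nat) :
  Z.abs (3 * Z.of_nat (length (filter (fun y => C3 (x, y)) (zrange n)))
         - Z.of_nat (2 * n + 1)) <= 2.
Proof.
  unfold zrange. rewrite filter_map_swap, length_map.
  erewrite filter_ext
    with (g := fun k : nat => (x + Z.of_nat n - Z.of_nat k) mod 3 =? 0)
    by (intros k; unfold C3; cbn [fst snd]; do 2 f_equal; lia).
  rewrite length_filter_mod3_seq. Z.div_mod_to_equations. lia.
Qed.

Lemma length_filter_list_prod {A B : Type} (l1 : list A) (l2 : list B) (f : A * B -> bool) :
  length (filter f (list_prod l1 l2)) =
  list_sum (map (fun x => length (filter (fun y => f (x, y)) l2)) l1).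
Proof.
  induction l1 as [| x l1 IH]; [reflexivity |].
  cbn [list_prod map list_sum fold_right].
  rewrite filter_app, length_app, filter_map_swap, length_map, IH.
  reflexivity.
Qed.

Lemma list_sum_map_near {A : Type} (l : list A) (g : A -> nat) (k m e : Z) :
  (forall x, In x l -> Z.abs (k * Z.of_nat (g x) - m) <= e) ->
  Z.abs (k * Z.of_nat (list_sum (map g l)) - Z.of_nat (length l) * m)
    <= Z.of_nat (length l) * e.
Proof.
  induction l as [| x l IH]; intros Hg; [cbn; lia |].
  specialize (IH (fun y Hy => Hg y (or_intror Hy))). specialize (Hg x (or_introl eq_refl)).
  change (list_sum (map g (x :: l))) with (g x + list_sum (map g l))%nat.
  cbn [length]. rewrite Nat2Z.inj_add, Nat2Z.inj_succ, Z.mul_add_distr_l, !Z.mul_succ_l.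
  lia.
Qed.

Lemma C3_count_V_n (n : nat) :
  Z.abs (3 * Z.of_nat (length (filter C3 (V_n n)))
         - Z.of_nat (2 * n + 1) * Z.of_nat (2 * n + 1)) <= 2 * Z.of_nat (2 * n + 1).
Proof.
  unfold V_n, vertex. rewrite length_filter_list_prod.
  rewrite Z.mul_comm with (n := 2), <- (length_zrange n).
  apply list_sum_map_near. intros x _. rewrite length_zrange. apply C3_row_count.
Qed.

Open Scope R_scope.

Lemma is_lim_seq_of_Rabs_sub_le (u e : nat -> R) (l : R) :
  (forall n, Rabs (u n - l) <= e n) -> is_lim_seq e 0 -> is_lim_seq u l.
Proof.
  intros Hue He.
  apply is_lim_seq_le_le with (u := fun n => l - e n) (w := fun n => l + e n).
  - intros n. now apply Rabs_le_between'.
  - replace (Finite l) with (Rbar_minus l 0) by (cbn; f_equal; ring).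
    apply is_lim_seq_minus'; [apply is_lim_seq_const | exact He].
  - replace (Finite l) with (Rbar_plus l 0) by (cbn; f_equal; ring).
    apply is_lim_seq_plus'; [apply is_lim_seq_const | exact He].
Qed.

Lemma is_lim_seq_inv_INR_S : is_lim_seq (fun n => / (INR n + 1)) 0.
Proof.
  replace (Finite 0) with (Rbar_inv p_infty) by reflexivity.
  apply is_lim_seq_inv; [| discriminate].
  apply (is_lim_seq_plus _ _ p_infty 1 p_infty);
    [apply is_lim_seq_INR | apply is_lim_seq_const | reflexivity].
Qed.

Lemma ratio_near_third (a m : R) :
  0 < m -> Rabs (3 * a - m * m) <= 2 * m -> Rabs (a / (m * m) - 1 / 3) <= 2 / (3 * m).
Proof.
  intros Hm H.
  replace (a / (m * m) - 1 / 3) with ((3 * a - m * m) / (3 * m * m)) by (field; lra).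
  unfold Rdiv. rewrite Rabs_mult, Rabs_inv, (Rabs_right (3 * m * m)) by nra.
  apply Rle_trans with (2 * m * / (3 * m * m));
    [apply Rmult_le_compat_r; [apply Rlt_le, Rinv_0_lt_compat; nra | exact H] |].
  right. field. lra.
Qed.

Lemma C3_density_error (n : nat) :
  Rabs (INR (length (filter C3 (V_n n))) / INR (length (V_n n)) - 1 / 3) <= / (INR n + 1).
Proof.
  set (m := INR (2 * n + 1)).
  assert (Hm : m = 2 * INR n + 1) by (unfold m; rewrite plus_INR, mult_INR; reflexivity).
  assert (Hn := pos_INR n).
  unfold V_n at 2, vertex. rewrite length_prod, length_zrange, mult_INR. fold m.
  apply Rle_trans with (2 / (3 * m)).
  - apply ratio_near_third; [lra |].
    pose proof (IZR_le _ _ (C3_count_V_n n)) as H.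
    rewrite abs_IZR, minus_IZR, !mult_IZR, <- !INR_IZR_INZ in H. exact H.
  - rewrite Hm. apply Rle_trans with (/ (3 * INR n + 3 / 2));
      [right; field; lra | apply Rinv_le_contravar; lra].
Qed.

Lemma C3_density : density C3 = Finite (1 / 3).
Proof.
  apply is_LimSup_seq_unique, is_lim_LimSup_seq.
  exact (is_lim_seq_of_Rabs_sub_le _ _ _ C3_density_error is_lim_seq_inv_INR_S).
Qed.

Theorem theorem12 :
  self_locating_dominating C3 /\ density C3 = Finite (1 / 3)%R.
Proof. exact (conj C3_self_locating_dominating C3_density). Qed.
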